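(* Let $M\ge1$, $S=\{0,1,2,\dots\}^M$, $N(n)=\{u\in\{-1,0,1\}^M: n+u\in S\}$, and let $P$ be the transition matrix of a discrete-time random walk $R$ on $S$ with $P(n,n')>0$ only if $n'-n\in N(n)$, homogeneous with respect to a partition $C=\{C_k\}_{k\in K}$ of $S$ (index function $c$), and let $Z=\{Z_j\}_{j\in J}$ be a refinement of $C$ (index function $z$), all as in the context. Consider the optimization problem in the variables $\varphi_{j,u,d,v}$, indexed by $j\in J$, $u\in N_j$, $d\in N_{j,u}$, $v\in N_{c(j,d)}$: $$\min \sum_{j\in J}\sum_{u\in N_j}\sum_{d\in N_{j,u}}\sum_{v\in N_{c(j,d)}}\varphi_{j,u,d,v}$$ subject to, for all $j\in J$, $u\in N_j$, $d\in N_{j,u}$, $$\sum_{v\in N_{c(j,d)}}\mathbf{1}(d+v\in N_{j,u})\bigl[\varphi_{j,u,d+v,-v}-\varphi_{j,u,d,v}\bigr]=p_{c(j,u),d-u}-p_{j,d},$$ and $\varphi_{j,u,d,v}\ge 0$ for all indices. Then this problem has a finite number of variables and constraints and is feasible. Moreover, if $(\varphi_{j,u,d,v})$ is an optimal solution, then the numbers defined for $n,m\in S$, $u\in N_{c(n)}$, $v\in N_{c(m)}$ by $$\phi(n,u,m,v)=\begin{cases}\varphi_{z(n),u,m-n,v}, & \text{if } m-n\in N_{z(n),u}\text{ and } m+v-n\in N_{z(n),u},\\ 0, &\text{otherwise},\end{cases}$$ are nonnegative and satisfy, for all $n,m\in S$ and $u\in N_{c(n)}$, $$\sum_{v\in 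N_{c(m)}}\bigl[\phi(n,u,m+v,-v)-\phi(n,u,m,v)\bigr]=P(n+u,m)-P(n,m).$$
   Context: A family $C=\{C_k\}_{k\in K}$, with $K$ finite, is a partition of $S$ if its sets are pairwise disjoint, cover $S$, and $N(n)=N(n')$ for all $n,n'$ in the same $C_k$; this common set is denoted $N_k$, and $c(n)$ denotes the index $k$ with $n\in C_k$. The random walk $R$ is homogeneous with respect to $C$: $P(n,n+u)=p_{c(n),u}$ for $u\in N_{c(n)}$, depending on $n$ only through $c(n)$, and $P(n,n')=0$ if $n'-n\notin N(n)$. A refinement $Z=\{Z_j\}_{j\in J}$ of $C$ is a partition of $S$ in the same sense, with finite index set $J$, index function $z$ and common transition sets $N_j$, such that for every $j\in J$ and $u\in N_j$, $c(n+u)$ is the same for all $n\in Z_j$; this common index is denoted $c(j,u)$. $R$ is then also homogeneous with respect to $Z$, and $p_{j,d}$ denotes $P(n,n+d)$ for $n\in Z_j$ (equal to $0$ if $d\notin N_j$). For $j\in J$, $u\in N_j$, let $N_{j,u}=N_j\cup(u+N_{c(j,u)})$. It is assumed (as presupposed by the notation) that for $d\in N_{j,u}$ the index $c(n+d)$ is the same for all $n\in Z_j$; it is denoted $c(j,d)$. Finally $p_{c(j,u),d-u}$ denotes $P(n+u,n+d)$ for $n\in Z_j$ (equal to $0$ if $d-u\notin N_{c(j,u)}$). *)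

From HB Require Import structures.
From mathcomp Require Import all_boot all_order all_algebra.
Set Implicit Arguments. Unset Strict Implicit. Unset Printing Implicit Defensive.
Import Order.TTheory GRing.Theory Num.Theory.
Local Open Scope ring_scope.

Definition vec (M : nat) := {ffun 'I_M -> int}.

Definition inS (M : nat) (n : vec M) : bool := [forall i, (0 <= n i)%R].

Definition dirs (M : nat) : seq (vec M) :=
  [seq [ffun i => ((nat_of_ord (f i))%:Z - 1)%R] | f : {ffun 'I_M -> 'I_3} <- enum {ffun 'I_M -> 'I_3}].

Definition Nset (M : nat) (n : vec M) : seq (vec M) :=
  [seq u <- dirs M | inS (n + u)].

(* For n in Z_j and u in N_j:  N_{j,u} = N_j U (u + N_{c(j,u)})
   where N_j = N(n) and N_{c(j,u)} = N(n+u). *)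
Definition Nju (M : nat) (n u : vec M) : seq (vec M) :=
  undup (Nset n ++ [seq u + w | w <- Nset (n + u)]).

(* Partition of S with index function c and finite index set K:
   common transition set on each class. *)
Definition is_partition (M : nat) (K : finType) (c : vec M -> K) : Prop :=
  forall n n', inS n -> inS n' -> c n = c n' -> Nset n =i Nset n'.

Definition is_refinement (M : nat) (K J : finType) (c : vec M -> K) (z : vec M -> J)
  : Prop :=
  is_partition z /\
  forall n n', inS n -> inS n' -> z n = z n' ->
    forall u, u \in Nset n -> c (n + u) = c (n' + u).

Definition cjd_well_defined (M : nat) (K J : finType) (c : vec M -> K) (z : vec M -> J)
  : Prop :=
  forall n n', inS n -> inS n' -> z n = z n' ->
    forall u, u \in Nset n -> forall d, d \in Nju n u -> c (n + d) = c (n' + d).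

Definition homogeneous_walk (R : realFieldType) (M : nat) (K : finType)
  (c : vec M -> K) (p : K -> vec M -> R) (P : vec M -> vec M -> R) : Prop :=
  [/\ (forall n n', inS n -> inS n' -> 0 <= P n n'),
      (forall n n', inS n -> inS n' -> (n' - n) \notin Nset n -> P n n' = 0),
      (forall n, inS n -> \sum_(u <- Nset n) P n (n + u) = 1) &
      (forall n u, inS n -> u \in Nset n -> P n (n + u) = p (c n) u)].

(* Class-level quantities of the refinement, read off a representative
   rep j of Z_j (the value does not depend on the representative). *)
Section LP.
Variables (R : realFieldType) (M : nat) (J : finType)
  (rep : J -> vec M) (P : vec M -> vec M -> R).

Definition N_j (j : J) : seq (vec M) := Nset (rep j).
Definition N_ju (j : J) (u : vec M) : seq (vec M) := Nju (rep j) u.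
Definition N_cjd (j : J) (d : vec M) : seq (vec M) := Nset (rep j + d).
Definition p_jd (j : J) (d : vec M) : R := P (rep j) (rep j + d).
(* p_{c(j,u),d-u} = P(n+u, n+d) for n in Z_j *)
Definition p_cju (j : J) (u d : vec M) : R := P (rep j + u) (rep j + d).

Definition var_index (j : J) (u d v : vec M) : bool :=
  [&& u \in N_j j, d \in N_ju j u & v \in N_cjd j d].

Definition cstr_index (j : J) (u d : vec M) : bool :=
  (u \in N_j j) && (d \in N_ju j u).

Definition objective (phi : J -> vec M -> vec M -> vec M -> R) : R :=
  \sum_(j : J) \sum_(u <- N_j j) \sum_(d <- N_ju j u) \sum_(v <- N_cjd j d)
     phi j u d v.

Definition feasible (phi : J -> vec M -> vec M -> vec M -> R) : Prop :=
  (forall j u d, cstr_index j u d ->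
     \sum_(v <- N_cjd j d)
        (if d + v \in N_ju j u then phi j u (d + v) (- v) - phi j u d v else 0)
     = p_cju j u d - p_jd j d)
  /\ (forall j u d v, var_index j u d v -> 0 <= phi j u d v).

Definition optimal (phi : J -> vec M -> vec M -> vec M -> R) : Prop :=
  feasible phi /\ forall psi, feasible psi -> objective phi <= objective psi.

Definition phi_ext (z : vec M -> J) (phi : J -> vec M -> vec M -> vec M -> R)
  (n u m v : vec M) : R :=
  if (m - n \in N_ju (z n) u) && (m + v - n \in N_ju (z n) u)
  then phi (z n) u (m - n) v else 0.

End LP.

From HB Require Import structures.
From mathcomp Require Import all_boot all_order all_algebra ring.
Import Order.TTheory GRing.Theory Num.Theory.
Local Open Scope ring_scope.
Set Implicit Arguments. Unset Strict Implicit. Unset Printing Implicit Defensive.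

(* Read phi_{j,u,d,v} as a flow along the edge d -> d + v of a graph on the finite
   node set N_{j,u}; the constraint at d is then flow conservation with net supply
   p_{c(j,u),d-u} - p_{j,d}.  For a representative r of Z_j, a feasible flow is the
   sum of three elementary ones: every d returns the mass P(r, r + d) to 0 (net
   supply [d = 0] - P(r, r + d)), one unit goes from 0 to u ([d = u] - [d = 0]),
   and u spreads that unit as P(r + u, r + u + .) (P(r + u, r + d) - [d = u]). *)

Lemma sum_seq_pred1 (V : nmodType) (T : eqType) (s : seq T) (C : pred T) (x : T) (a : V) :
  uniq s -> \sum_(v <- s | C v) (if v == x then a else 0) = if (x \in s) && C x then a else 0.
Proof.
move=> s_uniq; rewrite big_mkcond /=; case: (boolP (x \in s)) => xs /=.
  rewrite (bigD1_seq x) //= eqxx big1 ?addr0 => [|v /negbTE ->]; last by rewrite if_same.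
  by case: (C x).
rewrite big1_seq // => v /= vs; case: eqP => [vx|]; last by rewrite if_same.
by rewrite -vx vs in xs.
Qed.

Section Directions.
Variable M : nat.
Implicit Types n u v w d : vec M.

Lemma uniq_dirs : uniq (dirs M).
Proof.
rewrite map_inj_uniq ?enum_uniq // => f g /ffunP fg; apply/ffunP => i.
by move: (fg i); rewrite !ffunE => /addIr [] /val_inj.
Qed.

Lemma dirs0 : 0 \in dirs M.
Proof.
apply/mapP; exists [ffun=> (1 : 'I_3)%R]; first by rewrite mem_enum.
by apply/ffunP => i; rewrite !ffunE.
Qed.

Lemma dirsN v : v \in dirs M -> - v \in dirs M.
Proof.
case/mapP => f _ ->; apply/mapP; exists [ffun i => rev_ord (f i)]; first by rewrite mem_enum.
by apply/ffunP => i; rewrite !ffunE; case: (f i) => [[|[|[|k]]]].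
Qed.

Lemma mem_Nset n v : (v \in Nset n) = inS (n + v) && (v \in dirs M).
Proof. by rewrite mem_filter. Qed.

Lemma uniq_Nset n : uniq (Nset n).
Proof. exact/filter_uniq/uniq_dirs. Qed.

Lemma Nset_inS n v : v \in Nset n -> inS (n + v).
Proof. by rewrite mem_Nset => /andP []. Qed.

Lemma Nset0 n : inS n -> 0 \in Nset n.
Proof. by move=> nS; rewrite mem_Nset addr0 nS dirs0. Qed.

Lemma NsetN n v : inS n -> v \in Nset n -> - v \in Nset (n + v).
Proof. by move=> nS; rewrite !mem_Nset addrK nS => /andP [_ /dirsN]. Qed.

Lemma eq_Nset n n' : Nset n =i Nset n' -> Nset n = Nset n'.
Proof.
move=> eqN; apply: eq_in_filter => v vdir.
by move: (eqN v); rewrite !mem_Nset vdir !andbT.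
Qed.

Lemma mem_Nju n u d :
  (d \in Nju n u) = (d \in Nset n) || (d \in [seq u + w | w <- Nset (n + u)]).
Proof. by rewrite mem_undup mem_cat. Qed.

Lemma Nset_Nju n u d : d \in Nset n -> d \in Nju n u.
Proof. by rewrite mem_Nju => ->. Qed.

Lemma Nju_shift n u w : w \in Nset (n + u) -> u + w \in Nju n u.
Proof. by move=> wN; rewrite mem_Nju map_f ?orbT. Qed.

Lemma Nju_inS n u d : d \in Nju n u -> inS (n + d).
Proof.
rewrite mem_Nju => /orP [/Nset_inS //|/mapP [w /Nset_inS]].
by rewrite -addrA => + ->.
Qed.

Lemma eq_Nju n n' u :
  Nset n =i Nset n' -> Nset (n + u) =i Nset (n' + u) -> Nju n u =i Nju n' u.
Proof. by move=> eqN eqNu d; rewrite !mem_Nju eqN (eq_mem_map _ eqNu). Qed.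

End Directions.

Section Flows.
Variables (R : realFieldType) (M : nat).
Implicit Types (r u v d : vec M) (f g : vec M -> vec M -> R).

Definition net_flow r u f d : R :=
  \sum_(v <- Nset (r + d) | d + v \in Nju r u) (f (d + v) (- v) - f d v).

Lemma net_flowE r u f d :
  \sum_(v <- Nset (r + d)) (if d + v \in Nju r u then f (d + v) (- v) - f d v else 0)
  = net_flow r u f d.
Proof. by rewrite -big_mkcond. Qed.

Lemma net_flowD r u f g d :
  net_flow r u (fun d v => f d v + g d v) d = net_flow r u f d + net_flow r u g d.
Proof. by rewrite -big_split; apply: eq_bigr => v _; rewrite opprD addrACA. Qed.

Definition unit_flow u d v : R := if (d == 0) && (v == u) then 1 else 0.

Lemma net_unit_flow r u d : inS r -> u \in Nset r ->
  net_flow r u (unit_flow u) d = (d == u)%:R - (d == 0)%:R.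
Proof.
move=> rS uN; rewrite /net_flow sumrB /unit_flow; congr (_ - _).
  case: (d =P u) => [->|du]; last first.
    apply: big1 => v _; case: (- v =P u) => [vu|]; rewrite ?andbF //.
    by rewrite addr_eq0 vu (introF eqP du).
  have inflow_at_u v : (u + v == 0) && (- v == u) = (v == - u).
    by rewrite eqr_oppLR andb_idl // => /eqP ->; rewrite subrr.
  under eq_bigr => v _ do rewrite inflow_at_u.
  by rewrite sum_seq_pred1 ?uniq_Nset // NsetN //= subrr Nset_Nju ?Nset0.
case: (d =P 0) => [->|_]; last by rewrite big1.
by rewrite addr0 sum_seq_pred1 ?uniq_Nset // uN add0r Nset_Nju.
Qed.

End Flows.

Section Walk.
Variables (R : realFieldType) (M : nat) (K : finType) (c : vec M -> K)
  (p : K -> vec M -> R) (P : vec M -> vec M -> R).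
Implicit Types (r u v d n m : vec M).
Hypothesis P_walk : homogeneous_walk c p P.

Lemma P_ge0 n m : inS n -> inS m -> 0 <= P n m.
Proof. by case: P_walk => ge0 _ _ _; apply: ge0. Qed.

Lemma P_eq0 n m : inS n -> inS m -> m - n \notin Nset n -> P n m = 0.
Proof. by case: P_walk => _ eq0 _ _; apply: eq0. Qed.

Lemma sum_P n : inS n -> \sum_(v <- Nset n) P n (n + v) = 1.
Proof. by case: P_walk => _ _ sum1 _; apply: sum1. Qed.

Lemma P_eq_class a b m m' : is_partition c -> c a = c b ->
  inS a -> inS b -> inS m -> inS m' -> m - a = m' - b -> P a m = P b m'.
Proof.
move=> c_part cab aS bS mS m'S eq_step; have eqN := c_part a b aS bS cab.
case: (boolP (m - a \in Nset a)) => [stepN|stepNN]; last first.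
  by rewrite !P_eq0 // -eq_step -eqN.
case: P_walk => _ _ _ P_hom.
by rewrite -[m](subrKC a) -[m'](subrKC b) !P_hom // -?eqN -eq_step ?cab.
Qed.

Definition return_flow r d v : R := if d + v == 0 then P r (r + d) else 0.

Definition spread_flow r u d v : R := if d == u then P (r + u) (r + (d + v)) else 0.

Section Elementary.
Variables (r u : vec M).
Hypotheses (rS : inS r) (uN : u \in Nset r).

Lemma net_return_flow d : d \in Nju r u ->
  net_flow r u (return_flow r) d = (d == 0)%:R - P r (r + d).
Proof.
move=> dD; have rdS := Nju_inS dD.
rewrite /net_flow sumrB /return_flow; congr (_ - _).
  under eq_bigr => v _ do rewrite addrK.
  case: (d =P 0) => [->|_]; last by rewrite big1.
  rewrite addr0 big_rmcond_in => [|v vN]; last by rewrite add0r Nset_Nju.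
  by rewrite -(sum_P rS); apply: eq_bigr => v _; rewrite add0r.
under eq_bigr => v _ do rewrite addrC addr_eq0.
rewrite sum_seq_pred1 ?uniq_Nset // subrr Nset_Nju ?Nset0 // andbT.
case: ifP => // /negbT dNN; rewrite P_eq0 // [r + d]addrC addrK.
by apply: contra dNN; apply: NsetN.
Qed.

Lemma net_spread_flow d : d \in Nju r u ->
  net_flow r u (spread_flow r u) d = P (r + u) (r + d) - (d == u)%:R.
Proof.
move=> dD; have ruS := Nset_inS uN; have rdS := Nju_inS dD.
rewrite /net_flow sumrB /spread_flow; congr (_ - _).
  under eq_bigr => v _ do rewrite addrK [d + v]addrC eq_sym -subr_eq eq_sym.
  rewrite sum_seq_pred1 ?uniq_Nset // [d + _]addrC subrK Nset_Nju // andbT.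
  case: ifP => // /negbT stepNN; rewrite P_eq0 // [r + d]addrC addrKA.
  apply: contra stepNN => /(NsetN ruS).
  by rewrite opprB addrCA addrK addrC.
case: (d =P u) => [->|_]; last by rewrite big1.
rewrite big_rmcond_in => [|v vN]; last by rewrite Nju_shift.
by rewrite -(sum_P ruS); apply: eq_bigr => v _; rewrite addrA.
Qed.

End Elementary.
End Walk.

Section Witness.
Variables (R : realFieldType) (M : nat) (K J : finType) (c : vec M -> K)
  (p : K -> vec M -> R) (P : vec M -> vec M -> R) (rep : J -> vec M).
Hypotheses (P_walk : homogeneous_walk c p P) (rep_S : forall j, inS (rep j)).

Definition flow_witness (j : J) (u d v : vec M) : R :=
  return_flow P (rep j) d v + unit_flow R u d v + spread_flow P (rep j) u d v.

Lemma flow_witness_feasible : feasible rep P flow_witness.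
Proof.
split=> [j u d /andP [uN dD] | j u d v /and3P [uN dD vN]].
  rewrite net_flowE /flow_witness !net_flowD.
  rewrite (net_return_flow P_walk) // net_unit_flow // (net_spread_flow P_walk) //.
  by rewrite /p_cju /p_jd; ring.
have rdS := Nju_inS dD; have rdvS := Nset_inS vN.
rewrite /flow_witness /return_flow /unit_flow /spread_flow.
apply: addr_ge0; [apply: addr_ge0 |].
- by case: ifP => // _; apply: (P_ge0 P_walk).
- by case: ifP.
- by case: ifP => // /eqP <-; rewrite (P_ge0 P_walk) // addrA.
Qed.

End Witness.

Section Indices.
Variables (M : nat) (J : finType) (rep : J -> vec M).

Definition cstr_indices : seq (J * vec M * vec M) :=
  [seq (ju, d) | ju <- [seq (j, u) | j <- enum J, u <- N_j rep j], d <- N_ju rep ju.1 ju.2].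

Definition var_indices : seq (J * vec M * vec M * vec M) :=
  [seq (jud, v) | jud <- cstr_indices, v <- N_cjd rep jud.1.1 jud.2].

Lemma mem_cstr_indices j u d : cstr_index rep j u d -> (j, u, d) \in cstr_indices.
Proof.
case/andP => uN dD; apply/allpairsPdep; exists (j, u), d; split=> //.
by apply/allpairsPdep; exists j, u; rewrite mem_enum.
Qed.

Lemma mem_var_indices j u d v : var_index rep j u d v -> (j, u, d, v) \in var_indices.
Proof.
case/and3P => uN dD vN; apply/allpairsPdep; exists (j, u, d), v; split=> //.
exact/mem_cstr_indices/andP.
Qed.

End Indices.

Section Transport.
Variables (R : realFieldType) (M : nat) (K J : finType) (c : vec M -> K) (z : vec M -> J)
  (p : K -> vec M -> R) (P : vec M -> vec M -> R) (rep : J -> vec M).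
Hypotheses (c_part : is_partition c) (z_refines : is_refinement c z)
  (c_jd : cjd_well_defined c z) (P_walk : homogeneous_walk c p P)
  (rep_z : forall j, inS (rep j) /\ z (rep j) = j).
Implicit Types (n m u v d : vec M) (phi : J -> vec M -> vec M -> vec M -> R).

Local Notation r n := (rep (z n)).

Lemma rep_inS n : inS (r n).
Proof. by case: (rep_z (z n)). Qed.

Lemma z_rep n : z n = z (r n).
Proof. by case: (rep_z (z n)). Qed.

Lemma Nset_rep n : inS n -> Nset n =i Nset (r n).
Proof. by move=> nS; apply: (proj1 z_refines) n _ nS (rep_inS n) (z_rep n). Qed.

Lemma c_shift_rep n u : inS n -> u \in Nset n -> c (n + u) = c (r n + u).
Proof. by move=> nS uN; apply: (proj2 z_refines) n _ nS (rep_inS n) (z_rep n) u uN. Qed.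

Lemma Nju_rep n u : inS n -> u \in Nset n -> Nju n u =i Nju (r n) u.
Proof.
move=> nS uN; have ruS : inS (r n + u) by apply: Nset_inS; rewrite -Nset_rep.
exact: eq_Nju (Nset_rep nS) (c_part (Nset_inS uN) ruS (c_shift_rep nS uN)).
Qed.

Lemma Nset_shift_rep n u d : inS n -> u \in Nset n -> d \in Nju n u ->
  Nset (n + d) = Nset (r n + d).
Proof.
move=> nS uN dD; apply/eq_Nset/c_part; rewrite ?(Nju_inS dD) //.
- by apply: (Nju_inS (u := u)); rewrite -Nju_rep.
- exact: c_jd n _ nS (rep_inS n) (z_rep n) _ uN _ dD.
Qed.

Lemma P_rep n m : inS n -> inS m -> inS (r n + (m - n)) -> P n m = P (r n) (r n + (m - n)).
Proof.
move=> nS mS rdS; have c_n : c n = c (r n).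
  by have := c_shift_rep nS (Nset0 nS); rewrite !addr0.
apply: (P_eq_class P_walk c_part c_n nS (rep_inS n) mS rdS).
by rewrite [r n + _]addrC addrK.
Qed.

Lemma P_shift_rep n u m : inS n -> u \in Nset n -> inS m -> inS (r n + (m - n)) ->
  P (n + u) m = P (r n + u) (r n + (m - n)).
Proof.
move=> nS uN mS rdS; have ruS : inS (r n + u) by apply: Nset_inS; rewrite -Nset_rep.
apply: (P_eq_class P_walk c_part (c_shift_rep nS uN) (Nset_inS uN) ruS mS rdS).
by rewrite [r n + _]addrC addrKA opprD addrA.
Qed.

Lemma phi_ext_ge0 phi n u m v : feasible rep P phi ->
  inS n -> u \in Nset n -> v \in Nset m -> 0 <= phi_ext rep z phi n u m v.
Proof.
move=> [_ phi_ge0] nS uN vN; rewrite /phi_ext; case: ifP => // /andP [dD dvD].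
apply/phi_ge0/and3P; split=> //; first by rewrite /N_j -Nset_rep.
rewrite /N_cjd mem_Nset -addrA -[m - n + v]addrAC (Nju_inS dvD).
by move: vN; rewrite mem_Nset => /andP [].
Qed.

Lemma phi_ext_balance phi n m u : feasible rep P phi ->
  inS n -> inS m -> u \in Nset n ->
  \sum_(v <- Nset m) (phi_ext rep z phi n u (m + v) (- v) - phi_ext rep z phi n u m v)
  = P (n + u) m - P n m.
Proof.
move=> [balance _] nS mS uN; rewrite /phi_ext.
under eq_bigr => v _ do rewrite addrK [m + v - n]addrAC.
have eqNju := Nju_rep nS uN.
case: (boolP (m - n \in N_ju rep (z n) u)) => [dD|dND].
  have rdS : inS (r n + (m - n)) := Nju_inS dD.
  rewrite (P_rep nS mS rdS) (P_shift_rep nS uN mS rdS) -balance; last first.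
    by rewrite /cstr_index dD /N_j -Nset_rep ?uN.
  rewrite -{1}[m](subrKC n) (Nset_shift_rep nS uN) ?eqNju //.
  by apply: eq_bigr => v _; rewrite andbT /=; case: ifP; rewrite ?subr0.
rewrite big1 => [|v _]; last by rewrite andbF subrr.
have step_notin : m - n \notin Nset n.
  by apply: contra dND => /(Nset_Nju u); rewrite -eqNju.
have shifted_step_notin : m - (n + u) \notin Nset (n + u).
  by apply: contra dND => /Nju_shift; rewrite -eqNju addrC opprD addrA subrK.
by rewrite !(P_eq0 P_walk) ?subrr ?(Nset_inS uN).
Qed.

End Transport.

Theorem theorem3 (R : realFieldType) (M : nat) (K J : finType)
  (c : vec M -> K) (z : vec M -> J) (p : K -> vec M -> R)
  (P : vec M -> vec M -> R) (rep : J -> vec M) :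
  (0 < M)%N ->
  is_partition c ->
  is_refinement c z ->
  cjd_well_defined c z ->
  homogeneous_walk c p P ->
  (forall j, inS (rep j) /\ z (rep j) = j) ->
  (* finitely many variables and constraints *)
  ((exists s : seq (J * vec M * vec M * vec M),
      forall j u d v, var_index rep j u d v -> (j, u, d, v) \in s) /\
   (exists s : seq (J * vec M * vec M),
      forall j u d, cstr_index rep j u d -> (j, u, d) \in s)) /\
  (* feasibility *)
  (exists phi, feasible rep P phi) /\
  (* properties of the extension of an optimal solution *)
  (forall phi, optimal rep P phi ->
     (forall n m u v, inS n -> inS m -> u \in Nset n -> v \in Nset m ->
        0 <= phi_ext rep z phi n u m v) /\
     (forall n m u, inS n -> inS m -> u \in Nset n ->
        \sum_(v <- Nset m)
          (phi_ext rep z phi n u (m + v) (- v) - phi_ext rep z phi n u m v)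
        = P (n + u) m - P n m)).
Proof.
move=> _ c_part z_refines c_jd P_walk rep_z.
split; [split | split].
- by exists (var_indices rep) => j u d v; apply: mem_var_indices.
- by exists (cstr_indices rep) => j u d; apply: mem_cstr_indices.
- exists (flow_witness P rep); apply: flow_witness_feasible P_walk _ => j.
  exact: (rep_z j).1.
move=> phi [phi_feasible _]; split=> [n m u v nS _ uN vN | n m u nS mS uN].
  exact: (phi_ext_ge0 z_refines rep_z phi_feasible nS uN vN).
exact: (phi_ext_balance c_part z_refines c_jd P_walk rep_z phi_feasible nS mS uN).
Qed.
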